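(* Let $m\geq1$ and let $\Delta$ be the triangle with vertices $(-\alpha,0)$, $(m-1+\beta,0)$, $(m,m+1)$, where $\alpha,\beta$ are rational with $0<\alpha<\frac{1}{1+(m+1)+(m+1)^2}$ and $\frac{1}{m+2}<\beta<1-\frac{1}{1+\frac{1}{m+1}+\frac{1}{(m+1)^2}-\frac{\alpha}{1-(m+2)\alpha}}$. With $C$, $D$ and $HC_k$ as in the context, $m\notin HC_k$.
   Context: Let $k$ be an algebraically closed field of characteristic zero, $t_0=(1,1)$. For a rational triangle $\Delta$, $X_\Delta$ is the projective toric surface defined by $\Delta$ (containing the torus $T$ with coordinates $x,y$), $\pi:X=\mathrm{Bl}_{t_0}X_\Delta\to X_\Delta$ the blowup with exceptional curve $E$. Divisor classes on $X_\Delta$ correspond to rational triangles with sides parallel to those of $\Delta$ (each side's line containing a lattice point), up to integral translation, and global sections of the corresponding sheaf are Laurent polynomials with Newton polygon in that triangle. $\xi_m\in\mathbb{Z}[x,y]$ is the polynomial $(-1)^mx^my^{m+1}+\sum_{j=0}^{m-1}\sum_{i=j}^{m-1}(-1)^j\binom{m+1}{j}x^iy^j$. $C\subset X$ is the strict transform of $\{\xi_m=0\}$. $D$ is the class $\pi^*H'-(m+1)E$, where $H'$ corresponds to the triangle with sides parallel to those of $\Delta$ and base the interval $[0,m]$ on the $x$-axis. For a global section $s$ of $\mathcal{O}_X(lD)$ given by a rational function $f$, $V(s)$ is the support of $\mathrm{div}(f)+lD$. $HC_k=\{l\in\mathbb{Z}_{>0}:\mathcal{O}_X(lD)\text{ has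 a global section }\zeta\text{ with }C\cap V(\zeta)=\emptyset\}$. Equivalently, $l\in HC_k$ iff there is a Laurent polynomial $\zeta\in k[x^{\pm1},y^{\pm1}]$ whose Newton polygon lies in the triangle with sides parallel to those of $\Delta$ and base $[0,lm]$ on the $x$-axis, vanishing to order $l(m+1)$ at $t_0$, with nonzero constant term. *)

From HB Require Import structures.
From mathcomp Require Import all_boot all_order all_algebra.
From mathcomp Require Import mpoly.
Set Implicit Arguments. Unset Strict Implicit. Unset Printing Implicit Defensive.
Import Order.TTheory GRing.Theory Num.Theory.
Local Open Scope ring_scope.

Definition x0 : 'I_2 := ord0.
Definition y1 : 'I_2 := ord_max.

Definition shift_t0 (k : comRingType) : 2.-tuple {mpoly k[2]} :=
  [tuple ('X_x0 + 1); ('X_y1 + 1)].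

(* p vanishes to order at least N at t0 = (1,1): its Taylor expansion at (1,1)
   has no monomial of total degree < N. *)
Definition vanishes_at_t0 (k : comRingType) (p : {mpoly k[2]}) (N : nat) : Prop :=
  forall mo, mo \in msupp (comp_mpoly (shift_t0 k) p) -> (N <= mdeg mo)%N.

(* The lattice point (i, j) lies in the (closed) triangle with sides parallel to those
   of Delta = conv{(-a,0), (m-1+b,0), (m,m+1)} and base [0, L] on the x-axis:
   j >= 0, on the right of the line through (0,0) with direction (m+a, m+1),
   on the left of the line through (L,0) with direction (1-b, m+1). *)
Definition in_triangle (m : nat) (a b : rat) (L : nat) (i j : nat) : bool :=
  [&& 0 <= (j%:R : rat),
      0 <= (m.+1)%:R * i%:R - (m%:R + a) * j%:R
    & 0 <= (m.+1)%:R * (L%:R - i%:R) + (1 - b) * j%:R].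

Definition newton_in_triangle (k : comRingType) (m : nat) (a b : rat) (L : nat)
    (p : {mpoly k[2]}) : Prop :=
  forall mo, mo \in msupp p -> in_triangle m a b L (mo x0) (mo y1).

(* l \in HC_k, via the equivalent description given in the context. *)
Definition HC (k : comRingType) (m : nat) (a b : rat) (l : nat) : Prop :=
  (0 < l)%N /\
  exists zeta : {mpoly k[2]},
    [/\ newton_in_triangle m a b (l * m) zeta,
        vanishes_at_t0 zeta (l * m.+1)
      & zeta@_(0%MM) != 0].

(* Restrict zeta to the horizontal line y = 1 through t0.  For b > 1/(m+2) every lattice
   point of the triangle with base [0, m^2] has x-coordinate < m(m+1), so the restriction
   is a polynomial in x of degree < m(m+1) vanishing at x = 1 to order m(m+1): it is zero.
   Evaluating it at x = 0 gives zeta(0, 1), which is the constant term of zeta because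
   (0, 0) is the only lattice point of the triangle on the y-axis. *)
From HB Require Import structures.
From mathcomp Require Import all_boot all_order all_algebra.
From mathcomp Require Import mpoly.
From mathcomp Require Import zify lra.
Set Implicit Arguments. Unset Strict Implicit. Unset Printing Implicit Defensive.
Import Order.TTheory GRing.Theory Num.Theory.
Local Open Scope ring_scope.

Section LatticePointsInTriangle.
Variables (m : nat) (a b : rat).

Lemma in_triangle_base L i : in_triangle m a b L i 0 -> (i <= L)%N.
Proof.
case/and3P=> _ _; rewrite mulr0 addr0 pmulr_rge0 ?ltr0Sn // subr_ge0.
by rewrite ler_nat.
Qed.

Lemma in_triangle_slope L i j : 0 < a -> in_triangle m a b L i j ->
  (0 < j)%N -> (m * j < m.+1 * i)%N.
Proof.
move=> ha /and3P [_ hleft _] hj.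
have haj : 0 < a * j%:R :> rat by rewrite mulr_gt0 // ltr0n.
by rewrite -(ltr_nat rat) !natrM; lra.
Qed.

Lemma in_triangle_y_axis L j : 0 < a -> in_triangle m a b L 0 j -> j = 0%N.
Proof.
move=> ha h0j; case: (posnP j) => // hj.
by have := in_triangle_slope ha h0j hj; rewrite muln0.
Qed.

Lemma in_triangle_right L i j : 1 / (m.+2)%:R < b -> in_triangle m a b L i j ->
  (0 < j)%N -> (m.+2 * (i - L) < j)%N.
Proof.
move=> hb /and3P [_ _ hright] hj.
case: (leqP i L) => [/eqP -> | hLi]; first by rewrite muln0.
have hbm : 1 < b * (m.+2)%:R by rewrite -ltr_pdivrMr ?ltr0n.
have hbj : 0 < (b * (m.+2)%:R - 1) * j%:R :> rat by rewrite mulr_gt0 ?subr_gt0 ?ltr0n.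
have hm0 : 0 <= m%:R :> rat by [].
rewrite -(ltr_nat rat) natrM natrB 1?ltnW // -!natr1 in hright hbm hbj *.
nra.
Qed.

Lemma in_triangle_sq_x_lt i j : (1 <= m)%N -> 0 < a -> 1 / (m.+2)%:R < b ->
  in_triangle m a b (m * m) i j -> (i < m * m.+1)%N.
Proof.
move=> hm ha hb hij.
(* The rational bound x <= m^2 (m+a) / (m-1+a+b) alone can exceed m(m+1);
   integrality of (i, j) is needed. *)
case: (posnP j) => [j0 | hj].
  by move: hij; rewrite j0 => /in_triangle_base; rewrite mulnS; lia.
have := in_triangle_slope ha hij hj; have := in_triangle_right hb hij hj.
nia.
Qed.

End LatticePointsInTriangle.

Lemma mmap_comp_mpoly (n l : nat) (R S : comNzRingType) (f : {rmorphism R -> S})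
    (h : 'I_n -> S) (p : {mpoly R[l]}) (lq : l.-tuple {mpoly R[n]}) :
  mmap f h (p \mPo lq) = mmap f (fun i => mmap f h (tnth lq i)) p.
Proof.
rewrite comp_mpolyEX raddf_sum /= [RHS]/mmap.
apply: eq_bigr => mo _; rewrite mmapZ comp_mpolyX rmorph_prod /=.
by congr (_ * _); apply: eq_bigr => i _; rewrite rmorphXn.
Qed.

Lemma eq_mmap (n : nat) (R S : nzRingType) (f : R -> S) (h1 h2 : 'I_n -> S) :
  h1 =1 h2 -> mmap f h1 =1 mmap f h2.
Proof. by move=> eq_h p; apply: eq_bigr => mo _; rewrite (mmap1_eq _ eq_h). Qed.

Lemma mmap1_2E (S : nzRingType) (h : 'I_2 -> S) (mo : 'X_{1..2}) :
  mmap1 h mo = h x0 ^+ mo x0 * h y1 ^+ mo y1.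
Proof.
by rewrite /mmap1 big_ord_recl big_ord1 (_ : lift ord0 ord0 = y1) //; apply: val_inj.
Qed.

Lemma mdeg2E (mo : 'X_{1..2}) : mdeg mo = (mo x0 + mo y1)%N.
Proof.
by rewrite mdegE big_ord_recl big_ord1 (_ : lift ord0 ord0 = y1) //; apply: val_inj.
Qed.

Lemma mnm2_eq0 (mo : 'X_{1..2}) : mo x0 = 0%N -> mo y1 = 0%N -> mo = 0%MM.
Proof. by move=> hx hy; apply/eqP; rewrite -mdeg_eq0 mdeg2E hx hy. Qed.

Section RestrictionToHorizontalLine.
Variable R : comNzRingType.
Implicit Types (p : {mpoly R[2]}) (N : nat).

(* p(1 + X, 1): the restriction of p to the line y = 1, with t0 at X = 0. *)
Definition line_t0 p : {poly R} :=
  mmap polyC (fun i => if i == x0 then 'X + 1 else 1) p.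

Lemma line_t0E p :
  line_t0 p = mmap polyC (fun i => if i == x0 then 'X else 0) (p \mPo shift_t0 R).
Proof.
rewrite mmap_comp_mpoly; apply: eq_mmap => -[[|[|//]] i_lt2];
  by rewrite (tnth_nth 0) /= mmapD mmapX mmap1U mmapC /= ?add0r.
Qed.

Lemma size_line_t0 p N :
  (forall mo, mo \in msupp p -> (mo x0 < N)%N) -> (size (line_t0 p) <= N)%N.
Proof.
move=> hx; rewrite /line_t0 /mmap big_seq.
elim/big_ind: _ => [|q r hq hr|mo /hx hmo]; first by rewrite size_poly0.
  by rewrite (leq_trans (size_polyD _ _)) // geq_max hq hr.
rewrite mul_polyC (leq_trans (size_scale_leq _ _)) // mmap1_2E /= expr1n mulr1.
rewrite (leq_trans (size_poly_exp_leq _ _)) //.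
by rewrite -polyC1 size_XaddC mul1n.
Qed.

Lemma coef_line_t0 p N i :
  vanishes_at_t0 p N -> (i < N)%N -> (line_t0 p)`_i = 0.
Proof.
move=> hp hi; rewrite line_t0E /mmap coef_sum big_seq big1 // => mo /hp.
rewrite mdeg2E coefCM mmap1_2E /=.
case: (mo y1) => [|e] hmo; last by rewrite expr0n mulr0 coef0 mulr0.
by rewrite mulr1 coefXn addn0 in hmo *; rewrite ltn_eqF ?mulr0 // (leq_trans hi).
Qed.

Lemma line_t0_eq0 p N : (forall mo, mo \in msupp p -> (mo x0 < N)%N) ->
  vanishes_at_t0 p N -> line_t0 p = 0.
Proof.
move=> hx hp; apply/polyP => i; rewrite coef0.
case: (ltnP i N) => hi; first exact: coef_line_t0 hp hi.
by rewrite nth_default // (leq_trans (size_line_t0 hx) hi).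
Qed.

Lemma horner_line_t0_opp1 p :
  (forall mo, mo \in msupp p -> mo x0 = 0%N -> mo y1 = 0%N) -> (line_t0 p).[-1] = p@_0.
Proof.
move=> hy; rewrite [in RHS](mpolyE p) raddf_sum /= /line_t0 /mmap horner_sum !big_seq.
apply: eq_bigr => mo /hy hmo; rewrite mcoeffZ mcoeffX hornerCM mmap1_2E /=.
rewrite expr1n mulr1 horner_exp hornerD hornerX hornerC addNr.
case e: (mo x0) => [|d]; first by rewrite (mnm2_eq0 e (hmo e)) eqxx.
rewrite expr0n mulr0 (_ : mo == 0%MM = false) ?mulr0 //.
by apply/eqP => mo0; rewrite mo0 mnm0E in e.
Qed.

End RestrictionToHorizontalLine.

Theorem lemma5p7 (k : closedFieldType) (hk : [pchar k] =i pred0)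
    (m : nat) (a b : rat) (hm : (1 <= m)%N)
    (ha0 : 0 < a) (ha1 : a < 1 / (1 + (m.+1)%:R + (m.+1)%:R ^+ 2))
    (hb0 : 1 / (m.+2)%:R < b)
    (hb1 : b < 1 - 1 / (1 + 1 / (m.+1)%:R + 1 / (m.+1)%:R ^+ 2
                          - a / (1 - (m.+2)%:R * a))) :
  ~ HC k m a b m.
Proof.
move=> [_ [zeta [hNT hV hc0]]].
have hx mo : mo \in msupp zeta -> (mo x0 < m * m.+1)%N.
  by move/hNT; apply: in_triangle_sq_x_lt.
have hy mo : mo \in msupp zeta -> mo x0 = 0%N -> mo y1 = 0%N.
  by move/hNT => hmo hmo0; rewrite hmo0 in hmo; apply: in_triangle_y_axis hmo.
by move: hc0; rewrite -(horner_line_t0_opp1 hy) (line_t0_eq0 hx hV) horner0 eqxx.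
Qed.
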